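(* Let $(E,\|\cdot\|_E)$ be a fully symmetric sequence space with $E\neq l_\infty$, and let $T$ be a Dunford–Schwartz operator on $l_\infty$. Then for every $x\in E$ there exists $\widehat{x}\in E$ such that $$\Big\|\frac1n\sum_{k=0}^{n-1}T^k(x)-\widehat{x}\Big\|_\infty\to 0 \quad (n\to\infty).$$
   Context: $l_\infty$ is the Banach lattice of bounded real sequences $x=\{(x)_n\}_{n\ge1}$ with $\|x\|_\infty=\sup_n|(x)_n|$; $c_0$ is the subspace of sequences converging to $0$; $l_1$ is the space of absolutely summable sequences with $\|x\|_1=\sum_n|(x)_n|$. A linear operator $T:l_\infty\to l_\infty$ is a Dunford–Schwartz operator if $\|T(x)\|_1\le\|x\|_1$ for all $x\in l_1$ and $\|T(x)\|_\infty\le\|x\|_\infty$ for all $x\in l_\infty$. For $x\in l_\infty$, its non-increasing rearrangement is the sequence $x^*=\{(x^* )_n\}$ with $(x^* )_n=\inf\{\sup_{m\notin F}|(x)_m| : F\subset\mathbb N \text{ finite}, \operatorname{card}(F)<n\}$. A symmetric sequence space is a nonzero linear subspace $E\subset l_\infty$ with a Banach norm $\|\cdot\|_E$ such that $y\in E$, $x\in l_\infty$, $x^*\le y^*$ imply $x\in E$ and $\|x\|_E\le\|y\|_E$ (normalized so that $\|\{1,0,0,\dots\}\|_E=1$). Write $x\prec y$ if $\sum_{n=1}^k(x^* )_n\le\sum_{n=1}^k(y^* )_n$ for all $k\in\mathbb N$. A symmetric sequence space $E$ is fully symmetric if $x\in l_\infty$, $y\in E$, $x\prec y$ imply $x\in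 E$ and $\|x\|_E\le\|y\|_E$. *)

(* real sequences indexed by nat (index 0 = paper's index 1). *)
From HB Require Import structures.
From mathcomp Require Import all_boot all_order all_algebra.
From mathcomp Require Import all_classical all_reals.
Set Implicit Arguments. Unset Strict Implicit. Unset Printing Implicit Defensive.
Import Order.TTheory GRing.Theory Num.Theory.
Local Open Scope classical_set_scope.
Local Open Scope ring_scope.

Section Defs.
Variable R : realType.

Definition rseq := nat -> R.

Definition bounded (x : rseq) : Prop := exists M : R, forall n, `|x n| <= M.

Definition summable (x : rseq) : Prop :=
  exists M : R, forall N, \sum_(i < N) `|x i| <= M.

(* ||x||_infty (meaningful for bounded x) *)
Definition norm_inf (x : rseq) : R := sup [set `|x n| | n in [set: nat]].

(* ||x||_1 (meaningful for summable x) *)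
Definition norm1 (x : rseq) : R :=
  sup [set \sum_(i < N) `|x i| | N in [set: nat]].

(* non-increasing rearrangement, 0-indexed: (x^* )_n (0-indexed) =
   inf over finite F with card F < n+1 of sup_{m ∉ F} |x m|.
   Finite sets of cardinality <= n are exactly the sets of entries of
   lists of length <= n. *)
Definition xstar (x : rseq) (n : nat) : R :=
  inf [set sup [set `|x m| | m in [set m | m \notin F]]
      | F in [set F : seq nat | (size F <= n)%N]].

Definition majorized (x y : rseq) : Prop :=
  forall k : nat, \sum_(i < k) xstar x i <= \sum_(i < k) xstar y i.

Definition rseq_add (x y : rseq) : rseq := fun n => x n + y n.
Definition rseq_scale (a : R) (x : rseq) : rseq := fun n => a * x n.
Definition rseq_sub (x y : rseq) : rseq := fun n => x n - y n.

Definition symmetric_space (E : set rseq) (normE : rseq -> R) : Prop :=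
      (forall x, E x -> bounded x) /\
      (exists x, E x /\ x <> (fun _ => 0)) /\
      E (fun _ => 0) /\
      (forall x y, E x -> E y -> E (rseq_add x y)) /\
      (forall a x, E x -> E (rseq_scale a x)) /\
      [/\ (forall x, E x -> 0 <= normE x),
          (forall x, E x -> normE x = 0 -> x = (fun _ => 0)),
          (forall a x, E x -> normE (rseq_scale a x) = `|a| * normE x) &
          (forall x y, E x -> E y -> normE (rseq_add x y) <= normE x + normE y)] /\
      (forall u : nat -> rseq, (forall k, E (u k)) ->
        (forall eps : R, 0 < eps -> exists N, forall m n, (N <= m)%N -> (N <= n)%N ->
             normE (rseq_sub (u m) (u n)) < eps) ->
        exists v, E v /\ forall eps : R, 0 < eps -> exists N, forall n, (N <= n)%N ->
             normE (rseq_sub (u n) v) < eps) /\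
      (forall x y, E y -> bounded x -> (forall n, xstar x n <= xstar y n) ->
         E x /\ normE x <= normE y) /\
      normE (fun n => if n == 0%N then 1 else 0) = 1.

Definition fully_symmetric_space (E : set rseq) (normE : rseq -> R) : Prop :=
  symmetric_space E normE /\
  (forall x y, bounded x -> E y -> majorized x y -> E x /\ normE x <= normE y).

Definition linear_on_linf (T : rseq -> rseq) : Prop :=
  (forall x, bounded x -> bounded (T x)) /\
  (forall a x y, bounded x -> bounded y ->
     T (rseq_add (rseq_scale a x) y) = rseq_add (rseq_scale a (T x)) (T y)).

Definition dunford_schwartz (T : rseq -> rseq) : Prop :=
  linear_on_linf T /\
  (forall x, summable x -> summable (T x) /\ norm1 (T x) <= norm1 x) /\
  (forall x, bounded x -> norm_inf (T x) <= norm_inf x).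

Definition ces_avg (T : rseq -> rseq) (n : nat) (x : rseq) : rseq :=
  fun i => n%:R^-1 * \sum_(k < n) iter k T x i.

End Defs.

From HB Require Import structures.
From mathcomp Require Import all_boot all_order all_algebra.
From mathcomp Require Import all_classical all_reals.
From mathcomp Require Import topology normedtype sequences.
From mathcomp Require Import lra ring.
Import Order.TTheory GRing.Theory Num.Theory.
Import numFieldNormedType.Exports.
Local Open Scope classical_set_scope.
Local Open Scope ring_scope.

(* Since E is not l_infty, E is contained in c_0.  For x in c_0 the Cesaro
   averages A_n x are uniformly Cauchy: after truncating x to finite support,
   x lies in l_1 and T is an l_2-contraction (Schur's test), so one may pick
   y of almost minimal l_2-norm in the convex hull of the T-orbit of x; the
   parallelogram law makes all averages of y uniformly close, and
   A_n y - A_n x = O(1/n).  Finally Calderon's decomposition shows that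
   T, hence every A_n x and the uniform limit, is majorized by x; full
   symmetry then puts the limit in E. *)

Set Implicit Arguments. Unset Strict Implicit. Unset Printing Implicit Defensive.

Section SupInf.
Variable R : realType.
Variables (I : Type) (P : set I) (f : I -> R).

Lemma sup_image_le M :
  P !=set0 -> (forall i, P i -> f i <= M) -> sup (f @` P) <= M.
Proof.
move=> [i0 Pi0] fM; apply: ge_sup; first by exists (f i0), i0.
by move=> _ [i Pi <-]; apply: fM.
Qed.

Lemma le_sup_image M i :
  (forall i, P i -> f i <= M) -> P i -> f i <= sup (f @` P).
Proof.
move=> fM Pi; apply: sup_upper_bound; last by exists i.
split; first by exists (f i), i.
by exists M => _ [j Pj <-]; apply: fM.
Qed.

Lemma sup_image_adherent M e : 0 < e -> P !=set0 ->
  (forall i, P i -> f i <= M) -> exists2 i, P i & sup (f @` P) - e < f i.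
Proof.
move=> e0 [i0 Pi0] fM.
have hsup : has_sup (f @` P).
  by split; [exists (f i0), i0 | exists M => _ [j Pj <-]; apply: fM].
by have [_ [i Pi <-] lt] := sup_adherent e0 hsup; exists i.
Qed.

Lemma inf_image_le m i :
  (forall i, P i -> m <= f i) -> P i -> inf (f @` P) <= f i.
Proof.
move=> mf Pi; apply: ge_inf; last by exists i.
by exists m => _ [j Pj <-]; apply: mf.
Qed.

Lemma le_inf_image m :
  P !=set0 -> (forall i, P i -> m <= f i) -> m <= inf (f @` P).
Proof.
move=> [i0 Pi0] mf; apply: lb_le_inf; first by exists (f i0), i0.
by move=> _ [j Pj <-]; apply: mf.
Qed.

End SupInf.

Lemma ler_addgt0_scaled (R : realType) (a b K : R) :
  0 <= K -> (forall d, 0 < d -> a <= b + K * d) -> a <= b.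
Proof.
move=> K0 H; apply/ler_addgt0Pr => e e0.
have K1 : 0 < K + 1 by lra.
apply: le_trans (H (e / (K + 1)) (divr_gt0 e0 K1)) _.
rewrite lerD2l mulrA ler_pdivrMr // mulrC ler_pM2l //; lra.
Qed.

Lemma le_natmul_bound (R : realType) (K e : R) n : 0 <= K -> 0 < e ->
  (Num.bound (K / e) <= n)%N -> K <= n%:R * e.
Proof.
move=> K0 e0 Kn; rewrite -ler_pdivrMr //; apply: ltW.
by apply: lt_le_trans (archi_boundP (divr_ge0 K0 (ltW e0))) _; rewrite ler_nat.
Qed.

Section Sequences.
Variable R : realType.
Implicit Types (x y z u v w : rseq R).

Definition c0 x := forall e : R, 0 < e -> exists N, forall m, (N <= m)%N -> `|x m| <= e.

Definition trunc (N : nat) x : rseq R := fun m => if (m < N)%N then x m else 0.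

Lemma bound_ge0 x M : (forall n, `|x n| <= M) -> 0 <= M.
Proof. by move=> xM; apply: le_trans (xM 0%N). Qed.

Lemma norm_inf_ub x n : bounded x -> `|x n| <= norm_inf x.
Proof. by move=> [M xM]; apply: (@le_sup_image _ _ setT (fun n => `|x n|) M). Qed.

Lemma norm_inf_le x M : (forall n, `|x n| <= M) -> norm_inf x <= M.
Proof. by move=> xM; apply: sup_image_le => //; exists 0%N. Qed.

Lemma norm_inf_ge0 x : bounded x -> 0 <= norm_inf x.
Proof. by move=> bx; apply: le_trans (norm_inf_ub 0 bx). Qed.

Lemma bounded0 : bounded (fun _ : nat => 0 : R).
Proof. by exists 0 => n; rewrite normr0. Qed.

Lemma boundedZ a u : bounded u -> bounded (rseq_scale a u).
Proof. by move=> [M uM]; exists (`|a| * M) => n; rewrite normrM ler_wpM2l. Qed.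

Lemma boundedB u v : bounded u -> bounded v -> bounded (rseq_sub u v).
Proof.
move=> [M uM] [N vN]; exists (M + N) => n.
by apply: le_trans (ler_normB _ _) _; apply: lerD.
Qed.

Lemma trunc_bounded N x : bounded x -> bounded (trunc N x).
Proof.
move=> [M xM]; exists M => n; rewrite /trunc; case: ifP => // _.
by rewrite normr0; apply: bound_ge0 xM.
Qed.

Lemma trunc_out N x m : (N <= m)%N -> trunc N x m = 0.
Proof. by rewrite /trunc ltnNge => ->. Qed.

Lemma c0_trunc_approx x e : c0 x -> 0 < e ->
  exists N, forall m, `|x m - trunc N x m| <= e.
Proof.
move=> cx e0; have [N xN] := cx e e0; exists N => m.
rewrite /trunc; case: ltnP => mN; first by rewrite subrr normr0 ltW.
by rewrite subr0 xN.
Qed.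

Lemma sum_prefix_mono (g : nat -> R) M N : (forall i, 0 <= g i) -> (M <= N)%N ->
  \sum_(i < M) g i <= \sum_(i < N) g i.
Proof.
move=> g0 /subnKC <-; rewrite big_split_ord /= lerDl.
by apply: sumr_ge0 => i _.
Qed.

Lemma sum_prefix_split (g : nat -> R) (S : seq nat) N :
  uniq S -> (forall i, i \in S -> (i < N)%N) ->
  \sum_(i < N) g i = \sum_(i <- S) g i + \sum_(0 <= i < N | i \notin S) g i.
Proof.
move=> uS SN; rewrite -(big_mkord xpredT) (bigID (mem S)) /=; congr (_ + _).
rewrite -big_filter; apply/perm_big/uniq_perm => //.
  by apply/filter_uniq/iota_uniq.
move=> i; rewrite mem_filter mem_iota /= add0n subn0.
by case iS: (i \in S) => //=; rewrite SN.
Qed.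

Lemma sum_uniq_le_prefix (g : nat -> R) (S : seq nat) N : (forall i, 0 <= g i) ->
  uniq S -> (forall i, i \in S -> (i < N)%N) ->
  \sum_(i <- S) g i <= \sum_(i < N) g i.
Proof.
by move=> g0 uS SN; rewrite (sum_prefix_split g uS SN) lerDl sumr_ge0.
Qed.

Lemma sum_const_seq (I : Type) (S : seq I) (t : R) : \sum_(i <- S) t = (size S)%:R * t.
Proof.
elim: S => [|a S IH]; first by rewrite big_nil mul0r.
by rewrite big_cons IH /= -addn1 natrD mulrDl mul1r addrC.
Qed.

Lemma summable_bounded x : summable x -> bounded x.
Proof.
move=> [M xM]; exists M => n; apply: le_trans (xM n.+1).
by rewrite big_ord_recr /= lerDr sumr_ge0.
Qed.

Lemma summable_c0 x : summable x -> c0 x.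
Proof.
move=> [M xM] e e0; apply: contrapT => nc0.
have big_tail N : exists2 m, (N <= m)%N & e < `|x m|.
  apply: contrapT => nt; apply: nc0; exists N => m Nm.
  by rewrite leNgt; apply/negP => lt; apply: nt; exists m.
have sum_large K : exists P, K%:R * e <= \sum_(i < P) `|x i|.
  elim: K => [|K [P HP]]; first by exists 0%N; rewrite mul0r big_ord0.
  have [m Pm em] := big_tail P; exists m.+1.
  rewrite big_ord_recr /= -addn1 natrD mulrDl mul1r lerD ?(ltW em) //.
  exact: le_trans HP (sum_prefix_mono (fun i => normr_ge0 (x i)) Pm).
have M0 : 0 <= M by apply: le_trans (xM 0%N); rewrite big_ord0.
have [P HP] := sum_large (Num.bound (M / e)).
have := archi_boundP (divr_ge0 M0 (ltW e0)); rewrite ltr_pdivrMr // => lt.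
by have := le_lt_trans (xM P) (lt_le_trans lt HP); rewrite ltxx.
Qed.

Lemma finite_support_summable u N : (forall m, (N <= m)%N -> u m = 0) -> summable u.
Proof.
move=> uN; exists (\sum_(i < N) `|u i|) => P.
have [PN|NP] := leqP P N; first exact: sum_prefix_mono (fun i => normr_ge0 (u i)) PN.
rewrite -(subnKC (ltnW NP)) big_split_ord /= [X in _ + X]big1 ?addr0 //.
by move=> i _; rewrite uN ?normr0 ?leq_addr.
Qed.

Lemma trunc_summable N x : summable (trunc N x).
Proof. exact: (finite_support_summable (@trunc_out N x)). Qed.

Lemma norm1_ub z N : summable z -> \sum_(i < N) `|z i| <= norm1 z.
Proof.
by move=> [M zM]; apply: (@le_sup_image _ _ setT (fun N => \sum_(i < N) `|z i|) M).
Qed.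

Lemma sum_uniq_le_norm1 z (S : seq nat) : summable z -> uniq S ->
  \sum_(i <- S) `|z i| <= norm1 z.
Proof.
move=> sz uS; apply: le_trans (norm1_ub (\sum_(i <- S) i).+1 sz).
apply: sum_uniq_le_prefix => // i iS.
by rewrite ltnS (big_rem i iS) leq_addr.
Qed.

Lemma norm1_le_finite_support u N : (forall m, (N <= m)%N -> u m = 0) ->
  norm1 u <= \sum_(i < N) `|u i|.
Proof.
move=> uN; apply: sup_image_le => [|P _]; first by exists 0%N.
have [PN|NP] := leqP P N; first exact: sum_prefix_mono (fun i => normr_ge0 (u i)) PN.
rewrite -(subnKC (ltnW NP)) big_split_ord /= [X in _ + X]big1 ?addr0 //.
by move=> i _; rewrite uN ?normr0 ?leq_addr.
Qed.

End Sequences.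

Lemma notin_gt_sumn (F : seq nat) m : (sumn F < m)%N -> m \notin F.
Proof.
elim: F => //= a F IH ltm; rewrite in_cons negb_or IH ?andbT.
  by rewrite neq_ltn (leq_ltn_trans (leq_addr _ _) ltm) orbT.
by rewrite (leq_ltn_trans (leq_addl _ _) ltm).
Qed.

Lemma seq_has_min (T : eqType) (R : realType) (f : T -> R) (S : seq T) :
  S != [::] -> exists2 m0, m0 \in S & forall m, m \in S -> f m0 <= f m.
Proof.
elim: S => // a S IH _; have [-> | /IH [m0 m0S H]] := eqVneq S [::].
  by exists a; rewrite ?mem_seq1 // => m; rewrite mem_seq1 => /eqP ->.
have [fa|fa] := leP (f a) (f m0).
  exists a; first exact: mem_head.
  by move=> m; rewrite in_cons => /orP [/eqP -> // | /H]; apply: le_trans.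
exists m0; first by rewrite in_cons m0S orbT.
by move=> m; rewrite in_cons => /orP [/eqP -> | /H //]; apply: ltW.
Qed.

Lemma seq_has_max (T : eqType) (R : realType) (f : T -> R) (S : seq T) :
  S != [::] -> exists2 m0, m0 \in S & forall m, m \in S -> f m <= f m0.
Proof.
move=> /(seq_has_min (fun t => - f t)) [m0 m0S H]; exists m0 => // m /H.
by rewrite lerN2.
Qed.

Section Rearrangement.
Variable R : realType.
Implicit Types (x y : rseq R).

Definition tail_sup x (F : seq nat) := sup [set `|x m| | m in [set m | m \notin F]].

Lemma tail_sup_ub x F m : bounded x -> m \notin F -> `|x m| <= tail_sup x F.
Proof. by move=> [M xM]; apply: (@le_sup_image _ _ _ (fun m => `|x m|) M). Qed.

Lemma tail_sup_le x F M : (forall m, m \notin F -> `|x m| <= M) -> tail_sup x F <= M.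
Proof.
by move=> xM; apply: sup_image_le => //; exists (sumn F).+1; apply: notin_gt_sumn.
Qed.

Lemma tail_sup_adherent x F e : bounded x -> 0 < e ->
  exists2 m, m \notin F & tail_sup x F - e < `|x m|.
Proof.
move=> [M xM] e0; apply: (@sup_image_adherent _ _ _ (fun m => `|x m|) M) => //.
by exists (sumn F).+1; apply: notin_gt_sumn.
Qed.

Lemma tail_sup_ge0 x F : bounded x -> 0 <= tail_sup x F.
Proof. by move=> bx; apply: le_trans (tail_sup_ub bx (notin_gt_sumn (ltnSn _))). Qed.

Lemma le_xstar x n b :
  (forall F : seq nat, (size F <= n)%N -> b <= tail_sup x F) -> b <= xstar x n.
Proof. by move=> bF; apply: le_inf_image => //; exists [::]. Qed.

Lemma xstar_le_tail_sup x n F : bounded x -> (size F <= n)%N -> xstar x n <= tail_sup x F.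
Proof.
move=> bx Fn; apply: (@inf_image_le _ _ _ (tail_sup x) 0) => // G _.
exact: tail_sup_ge0.
Qed.

Lemma xstar_ge0 x n : bounded x -> 0 <= xstar x n.
Proof. by move=> bx; apply: le_xstar => F _; apply: tail_sup_ge0. Qed.

Lemma xstar_le x n M : bounded x -> (forall m, `|x m| <= M) -> xstar x n <= M.
Proof.
move=> bx xM; apply: le_trans (xstar_le_tail_sup bx (isT : (size [::] <= n)%N)) _.
exact: tail_sup_le.
Qed.

Definition xstar_psum x k := \sum_(i < k) xstar x i.

Lemma xstar_psum_ge0 x k : bounded x -> 0 <= xstar_psum x k.
Proof. by move=> bx; apply: sumr_ge0 => i _; apply: xstar_ge0. Qed.

Lemma xstar_psum_mono x k k' : bounded x -> (k <= k')%N ->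
  xstar_psum x k <= xstar_psum x k'.
Proof. by move=> bx; apply: sum_prefix_mono => i; apply: xstar_ge0. Qed.

Definition uniq_sums_le (c : nat -> R) y :=
  forall S : seq nat, uniq S -> \sum_(m <- S) `|y m| <= c (size S).

Lemma uniq_sums_le_trunc c y N : uniq_sums_le c y -> uniq_sums_le c (trunc N y).
Proof.
move=> cy S uS; apply: le_trans (cy S uS); apply: ler_sum => j _.
by rewrite /trunc; case: ifP; rewrite ?normr0.
Qed.

(* Remove from [S] its index of least [|x|]: every [F] with [size F < size S]
   misses some index of [S], so that least value is at most [x^*_(size S - 1)]. *)
Lemma uniq_sums_le_xstar_psum x : bounded x -> uniq_sums_le (xstar_psum x) x.
Proof.
move=> bx S; move: {2}(size S) (erefl (size S)) => k.
elim: k S => [|k IH] S sS uS.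
  by move/eqP: sS; rewrite size_eq0 => /eqP ->; rewrite big_nil /xstar_psum big_ord0.
have S0 : S != [::] by apply/negP => /eqP SE; rewrite SE in sS.
have [m0 m0S Hm0] := seq_has_min (fun m => `|x m|) S0.
rewrite (big_rem m0 m0S) /= sS /xstar_psum big_ord_recr /= addrC lerD //.
  have sr : size (rem m0 S) = k by rewrite size_rem // sS.
  by have := IH _ sr (rem_uniq m0 uS); rewrite sr.
apply: le_xstar => F sFk.
have [m mS mF] : exists2 m, m \in S & m \notin F.
  apply: contrapT => nE.
  have sub : {subset S <= F}.
    by move=> m mS; apply: contrapT => /negP mF; apply: nE; exists m.
  by have := uniq_leq_size uS sub; rewrite sS leqNgt ltnS sFk.
exact: le_trans (Hm0 m mS) (tail_sup_ub bx mF).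
Qed.

Lemma xstar_psum_approx x k e : bounded x -> 0 < e ->
  exists S : seq nat, [/\ uniq S, size S = k &
     xstar_psum x k <= \sum_(m <- S) `|x m| + k%:R * e].
Proof.
move=> bx e0; elim: k => [|k [S [uS sS HS]]].
  by exists [::]; split => //; rewrite /xstar_psum big_ord0 big_nil mul0r addr0.
have [m mS Hm] := tail_sup_adherent S bx e0.
exists (m :: S); split => /=; [by rewrite mS | by rewrite sS |].
rewrite /xstar_psum big_ord_recr /= big_cons -/(xstar_psum x k).
have : xstar x k <= `|x m| + e.
  by apply: le_trans (xstar_le_tail_sup bx (eq_leq sS)) _; rewrite -lerBlDr ltW.
rewrite -addn1 natrD mulrDl mul1r; move: HS; lra.
Qed.

Lemma majorized_of_uniq_sums_le x y :
  bounded y -> uniq_sums_le (xstar_psum x) y -> majorized y x.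
Proof.
move=> bY yx k; apply: (@ler_addgt0_scaled _ _ _ k%:R) => // d d0.
have [S [uS sS HS]] := xstar_psum_approx k bY d0.
have := yx S uS; rewrite sS -/(xstar_psum y k) -/(xstar_psum x k); move: HS; lra.
Qed.

(* A sequence [x] not in [c0] is, after scaling, pointwise above [x^*] of any
   bounded [z]; symmetry would then put every bounded [z] in [E]. *)
Lemma symmetric_space_c0 E normE x : symmetric_space E normE ->
  (exists z, bounded z /\ ~ E z) -> E x -> c0 x.
Proof.
move=> [Ebd [_ [_ [_ [EZ [_ [_ [Esym _]]]]]]]] [z [[M zM] nEz]] Ex.
apply: contrapT => ncx.
have [e [e0 He]] : exists e : R, 0 < e /\ forall N, exists m, (N <= m)%N /\ e < `|x m|.
  apply: contrapT => nH; apply: ncx => e e0; apply: contrapT => nN.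
  apply: nH; exists e; split => // N; apply: contrapT => nm; apply: nN; exists N => m Nm.
  by rewrite leNgt; apply/negP => lt; apply: nm; exists m.
have M0 : 0 <= M := bound_ge0 zM.
have Me0 : 0 <= M / e by apply: divr_ge0 => //; apply: ltW.
apply: nEz; have [] // := Esym z (rseq_scale (M / e) x) (EZ _ _ Ex) (ex_intro _ M zM).
move=> n; apply: le_trans (xstar_le n (ex_intro _ M zM) zM) _.
apply: le_xstar => F _; have [m [Fm em]] := He (sumn F).+1.
apply: le_trans (tail_sup_ub (boundedZ (M / e) (Ebd x Ex)) (notin_gt_sumn Fm)).
rewrite /rseq_scale normrM ger0_norm //.
by apply: le_trans (ler_wpM2l Me0 (ltW em)); rewrite divfK // gt_eqF.
Qed.

End Rearrangement.

Section SquareSums.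
Variable R : realType.
Implicit Types (u v w : rseq R).

(* The quadratic [t |-> \sum_j p_j (c_j - t)^2] is nonnegative; take [t = S / P]. *)
Lemma sqr_sum_le_weighted N (p c : nat -> R) : (forall j, 0 <= p j) ->
  (\sum_(j < N) p j * c j) ^+ 2 <= (\sum_(j < N) p j) * \sum_(j < N) p j * c j ^+ 2.
Proof.
move=> p0; set P := \sum_(j < N) p j; set S := \sum_(j < N) p j * c j.
set Q := \sum_(j < N) p j * c j ^+ 2.
have quad t : 0 <= Q - 2 * t * S + t ^+ 2 * P.
  have -> : Q - 2 * t * S + t ^+ 2 * P = \sum_(j < N) p j * (c j - t) ^+ 2.
    rewrite /Q /S /P mulr_sumr mulr_sumr -sumrB -big_split /=.
    by apply: eq_bigr => j _; ring.
  by apply: sumr_ge0 => j _; rewrite mulr_ge0 ?sqr_ge0.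
have [P0|P_gt0] := eqVneq P 0.
  have p_eq0 (j : 'I_N) : p j = 0.
    exact: (psumr_eq0P (F := fun j : 'I_N => p j) (fun j _ => p0 j) P0).
  by rewrite /S big1 ?expr0n ?P0 ?mul0r // => j _; rewrite p_eq0 mul0r.
have P_pos : 0 < P by rewrite lt_def P_gt0 sumr_ge0.
have := quad (S / P); rewrite -(@pmulr_rge0 _ P) //.
have -> : P * (Q - 2 * (S / P) * S + (S / P) ^+ 2 * P) = P * Q - S ^+ 2.
  by field; rewrite P_gt0.
by rewrite subr_ge0.
Qed.

Lemma sqr_le_sqr_add (a b d B : R) : `|a - b| <= d -> `|a| <= B -> `|b| <= B ->
  a ^+ 2 <= b ^+ 2 + 2 * B * d.
Proof.
move=> ab aB bB.
have h : a ^+ 2 - b ^+ 2 <= `|a - b| * `|a + b|.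
  by rewrite -normrM; apply: le_trans (ler_norm _); rewrite subr_sqr.
have : `|a - b| * `|a + b| <= d * (2 * B).
  by apply: ler_pM => //; apply: le_trans (ler_normD _ _) _; lra.
move: h; lra.
Qed.

Definition sqnorm2 w : R := sup [set \sum_(i < N) w i ^+ 2 | N in [set: nat]].

Lemma summable_sqr_sums_bounded w : summable w ->
  exists B, forall N, \sum_(i < N) w i ^+ 2 <= B.
Proof.
move=> sw; have [M0 wM0] := summable_bounded sw; have [M wM] := sw.
exists (M0 * M) => N; apply: le_trans (_ : _ <= \sum_(i < N) M0 * `|w i|) _.
  apply: ler_sum => i _; rewrite -real_normK ?num_real // expr2.
  exact: ler_wpM2r.
by rewrite -mulr_sumr ler_wpM2l ?(bound_ge0 wM0).
Qed.

Lemma sqnorm2_ub w N : summable w -> \sum_(i < N) w i ^+ 2 <= sqnorm2 w.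
Proof.
move=> /summable_sqr_sums_bounded [B wB].
exact: (@le_sup_image _ _ setT (fun N => \sum_(i < N) w i ^+ 2) B).
Qed.

Lemma sqnorm2_le w B : (forall N, \sum_(i < N) w i ^+ 2 <= B) -> sqnorm2 w <= B.
Proof. by move=> wB; apply: sup_image_le => [|N _]; [exists 0%N | apply: wB]. Qed.

Lemma sqnorm2_adherent w e : summable w -> 0 < e ->
  exists N, sqnorm2 w - e < \sum_(i < N) w i ^+ 2.
Proof.
move=> /summable_sqr_sums_bounded [B wB] e0.
have [N _ ?] := @sup_image_adherent _ _ setT (fun N => \sum_(i < N) w i ^+ 2) B e e0
  (ex_intro _ 0%N I) (fun N _ => wB N).
by exists N.
Qed.

Lemma sqnorm2_ge0 w : summable w -> 0 <= sqnorm2 w.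
Proof. by move=> sw; apply: le_trans (sqnorm2_ub 0 sw); rewrite big_ord0. Qed.

Definition comb (l : R) u v := rseq_add (rseq_scale l u) (rseq_scale (1 - l) v).

Lemma summable_comb l u v : 0 <= l <= 1 -> summable u -> summable v ->
  summable (comb l u v).
Proof.
move=> /andP [l0 l1] [M1 uM1] [M2 vM2]; have l1' : 0 <= 1 - l by lra.
exists (l * M1 + (1 - l) * M2) => N.
apply: le_trans (_ : _ <= \sum_(i < N) (l * `|u i| + (1 - l) * `|v i|)) _.
  apply: ler_sum => i _; apply: le_trans (ler_normD _ _) _.
  by rewrite /rseq_scale !normrM (ger0_norm l0) (ger0_norm l1').
rewrite big_split /= -!mulr_sumr.
by apply: lerD; apply: ler_wpM2l; [| apply: uM1 | | apply: vM2].
Qed.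

Lemma comb_le_norm_inf l u v i B : 0 <= l <= 1 -> `|u i| <= B -> `|v i| <= B ->
  `|comb l u v i| <= B.
Proof.
move=> /andP [l0 l1] uB vB; have l1' : 0 <= 1 - l by lra.
apply: le_trans (ler_normD _ _) _.
rewrite /rseq_scale !normrM (ger0_norm l0) (ger0_norm l1'); nra.
Qed.

Lemma sqnorm2_comb l u v : 0 <= l <= 1 -> summable u -> summable v ->
  sqnorm2 (comb l u v) <= l * sqnorm2 u + (1 - l) * sqnorm2 v.
Proof.
move=> /andP [l0 l1] su sv; apply: sqnorm2_le => N.
apply: le_trans (_ : _ <= \sum_(i < N) (l * u i ^+ 2 + (1 - l) * v i ^+ 2)) _.
  apply: ler_sum => i _; rewrite /comb /rseq_add /rseq_scale.
  have : 0 <= l * (1 - l) * (u i - v i) ^+ 2.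
    by rewrite mulr_ge0 ?sqr_ge0 // mulr_ge0 //; lra.
  rewrite !expr2; nra.
rewrite big_split /= -!mulr_sumr.
by rewrite lerD // ler_wpM2l ?sqnorm2_ub //; lra.
Qed.

Lemma parallelogram_le u v e i : summable u -> summable v -> 0 < e ->
  ((u i - v i) / 2) ^+ 2 <= (sqnorm2 u + sqnorm2 v) / 2 - sqnorm2 (comb (1/2) u v) + e.
Proof.
move=> su sv e0; set m := comb (1/2) u v.
have sm : summable m by apply: summable_comb => //; apply/andP; split; lra.
have [N0 HN0] := sqnorm2_adherent sm e0.
set N := maxn N0 i.+1.
have m_sums : \sum_(k < N0) m k ^+ 2 <= \sum_(k < N) m k ^+ 2.
  apply: (sum_prefix_mono (g := fun k => m k ^+ 2)) (leq_maxl _ _) => k.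
  exact: sqr_ge0.
have i_term : ((u i - v i) / 2) ^+ 2 <= \sum_(k < N) ((u k - v k) / 2) ^+ 2.
  have := @sum_uniq_le_prefix _ (fun k => ((u k - v k) / 2) ^+ 2) [:: i] N
    (fun k => sqr_ge0 _) isT.
  rewrite big_seq1; apply => k; rewrite mem_seq1 => /eqP ->.
  exact: leq_maxr.
have identity : \sum_(k < N) ((u k - v k) / 2) ^+ 2 =
   (\sum_(k < N) u k ^+ 2 + \sum_(k < N) v k ^+ 2) / 2 - \sum_(k < N) m k ^+ 2.
  rewrite -big_split /= mulr_suml -sumrB; apply: eq_bigr => k _.
  by rewrite /m /comb /rseq_add /rseq_scale; field.
have := sqnorm2_ub N su; have := sqnorm2_ub N sv.
move: m_sums i_term identity HN0; lra.
Qed.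

End SquareSums.

Section UniformConvergence.
Variable R : realType.
Implicit Types (f : nat -> rseq R) (g : rseq R).

Definition unif_cauchy f := forall e : R, 0 < e -> exists N, forall n m,
  (N <= n)%N -> (N <= m)%N -> forall i, `|f n i - f m i| <= e.

Definition unif_cvg f g := forall e : R, 0 < e -> exists N, forall n,
  (N <= n)%N -> forall i, `|f n i - g i| <= e.

Lemma cauchy_seq_lim (a : nat -> R) :
  (forall e : R, 0 < e -> exists N, forall n m,
    (N <= n)%N -> (N <= m)%N -> `|a n - a m| <= e) ->
  exists l : R, forall e : R, 0 < e -> exists N, forall n, (N <= n)%N -> `|l - a n| <= e.
Proof.
move=> a_cauchy.
have : cvg (a @ \oo).
  suff : cauchy_ex (a @ \oo) by move/cauchy_exP/cauchy_cvg.
  move=> e e0; rewrite /fmapE -ball_normE /ball_.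
  have [N HN] := a_cauchy (e / 2) (divr_gt0 e0 (ltr0Sn _ 1)).
  exists (a N), N => // m Nm.
  by apply: le_lt_trans (HN N m (leqnn N) Nm) _; lra.
rewrite cvg_ex /= => -[l /cvgrPdist_le a_l]; exists l => e e0.
by have [N _ HN] := a_l e e0; exists N.
Qed.

Lemma unif_cauchy_cvg f : unif_cauchy f -> exists g, unif_cvg f g.
Proof.
move=> fC.
have [g Hg] := choice (fun i => cauchy_seq_lim (a := fun n => f n i)
  (fun e e0 => let: ex_intro N HN := fC e e0 in
     ex_intro _ N (fun n m Nn Nm => HN n m Nn Nm i))).
exists g => e e0; have [N HN] := fC e e0; exists N => n Nn i.
apply/ler_addgt0Pr => d d0; have [N' HN'] := Hg i d d0; set m := maxn N N'.
have := HN n m Nn (leq_maxl _ _) i; have := HN' m (leq_maxr _ _).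
have -> : f n i - g i = (f n i - f m i) - (g i - f m i) by ring.
have := ler_normB (f n i - f m i) (g i - f m i); lra.
Qed.

Lemma unif_cauchy_approx f :
  (forall e : R, 0 < e -> exists (g : nat -> rseq R) N,
    (forall n m, (N <= n)%N -> (N <= m)%N -> forall i, `|g n i - g m i| <= e) /\
    (forall n, (N <= n)%N -> forall i, `|f n i - g n i| <= e)) ->
  unif_cauchy f.
Proof.
move=> f_approx e e0; have e3 : 0 < e / 3 by apply: divr_gt0.
have [g [N [gC fg]]] := f_approx _ e3; exists N => n m Nn Nm i.
have := ler_distD (g n i) (f n i) (f m i); have := ler_distD (g m i) (g n i) (f m i).
have := gC n m Nn Nm i; have := fg n Nn i; have := fg m Nm i.
rewrite (distrC (g m i)); lra.
Qed.

Lemma unif_cvg_bounded f g B : (forall n i, `|f n i| <= B) -> unif_cvg f g -> bounded g.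
Proof.
move=> fB fg; have [N HN] := fg 1 ltr01; exists (B + 1) => i.
have := ler_normD (f N i) (g i - f N i); rewrite addrCA subrr addr0 distrC.
by move: (HN N (leqnn N) i) (fB N i); lra.
Qed.

Lemma unif_cvg_uniq_sums_le (c : nat -> R) f g :
  (forall n, uniq_sums_le c (f n)) -> unif_cvg f g -> uniq_sums_le c g.
Proof.
move=> fc fg S uS; apply: (@ler_addgt0_scaled _ _ _ (size S)%:R) => // d d0.
have [N HN] := fg d d0; apply: le_trans (lerD (fc N S uS) (lexx _)).
rewrite -sum_const_seq -big_split /=; apply: ler_sum => j _.
have := ler_normD (f N j) (g j - f N j); rewrite addrCA subrr addr0 distrC.
by move: (HN N (leqnn N) j); lra.
Qed.

Lemma unif_cvg_norm_inf f g e : unif_cvg f g -> 0 < e ->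
  exists N, forall n, (N <= n)%N -> norm_inf (rseq_sub (f n) g) < e.
Proof.
move=> fg e0; have [N HN] := fg (e / 2) (divr_gt0 e0 (ltr0Sn _ 1)).
exists N => n Nn; apply: le_lt_trans (norm_inf_le (HN n Nn)) _; lra.
Qed.

End UniformConvergence.

Section Clipping.
Variable R : realType.
Implicit Types (y u v : rseq R).

Lemma top_indices y N k : (k <= N)%N -> exists A : seq nat,
  [/\ uniq A, size A = k, (forall a, a \in A -> (a < N)%N) &
      forall j, (j < N)%N -> j \notin A -> forall a, a \in A -> `|y j| <= `|y a|].
Proof.
elim: k => [|k IH] kN; first by exists [::].
have [A [uA sA AN top]] := IH (ltnW kN).
set C := [seq j <- iota 0 N | j \notin A].
have C0 : C != [::].
  apply/negP => /eqP C0.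
  have sub : {subset iota 0 N <= A}.
    move=> j jN; apply: contrapT => /negP jA.
    have : j \in C by rewrite mem_filter jA jN.
    by rewrite C0.
  by have := uniq_leq_size (iota_uniq 0 N) sub; rewrite size_iota sA leqNgt kN.
have [m mC Hm] := seq_has_max (fun j => `|y j|) C0.
move: (mC); rewrite mem_filter mem_iota add0n /= => /andP [mA mN].
exists (m :: A); split => /=; [by rewrite mA uA | by rewrite sA | |].
  by move=> a; rewrite in_cons => /orP [/eqP -> // | /AN].
move=> j jN; rewrite in_cons negb_or => /andP [jm jA] a.
rewrite in_cons => /orP [/eqP -> | aA]; last exact: top.
by apply: Hm; rewrite mem_filter jA mem_iota add0n jN.
Qed.

Lemma normr_sub_sgr (a t : R) : 0 <= t -> t <= `|a| -> `|a - Num.sg a * t| = `|a| - t.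
Proof.
move=> t0 ta; have [a0|a0|a0] := ltrgtP a 0.
- rewrite ltr0_sg // mulN1r opprK (ltr0_norm a0) ler0_norm ?opprD //.
  by rewrite ltr0_norm // in ta; lra.
- rewrite gtr0_sg // mul1r (gtr0_norm a0) ger0_norm //.
  by rewrite gtr0_norm // in ta; lra.
- by rewrite a0 normr0 in ta *; rewrite (@le_anti _ _ t 0) ?ta // sgr0 mul0r subr0 normr0.
Qed.

Lemma clip_decomposition y (A : seq nat) t : 0 <= t ->
  (forall a, a \in A -> t <= `|y a|) -> (forall j, j \notin A -> `|y j| <= t) ->
  exists u v, [/\ y = rseq_add u v, forall j, `|v j| <= t,
    forall j, j \notin A -> u j = 0 &
    \sum_(a <- A) `|u a| = \sum_(a <- A) `|y a| - (size A)%:R * t].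
Proof.
move=> t0 Ayt yAt.
exists (fun j => if j \in A then y j - Num.sg (y j) * t else 0).
exists (fun j => if j \in A then Num.sg (y j) * t else y j).
split.
- by apply: funext => j; rewrite /rseq_add; case: ifP; rewrite ?subrK ?add0r.
- move=> j; case: ifPn => [_|/yAt //].
  by rewrite normrM normr_sg ger0_norm //; case: (y j != 0); rewrite ?mul1r ?mul0r.
- by move=> j /negbTE ->.
rewrite -sum_const_seq -sumrB big_seq_cond [RHS]big_seq_cond.
by apply: eq_bigr => a /andP [aA _]; rewrite aA normr_sub_sgr ?Ayt.
Qed.

End Clipping.

Section UnitSequences.
Variable R : realType.

Definition unit_seq (j : nat) : rseq R := fun m => if m == j then 1 else 0.

Lemma unit_seq_bounded j : bounded (unit_seq j).
Proof. by exists 1 => m; rewrite /unit_seq; case: ifP; rewrite ?normr1 ?normr0. Qed.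

Lemma unit_seq_out j m : (j < m)%N -> unit_seq j m = 0.
Proof. by rewrite /unit_seq; case: eqP => // ->; rewrite ltnn. Qed.

Lemma unit_seq_summable j : summable (unit_seq j).
Proof. exact: (finite_support_summable (@unit_seq_out j)). Qed.

Lemma norm1_unit_seq j : norm1 (unit_seq j) <= 1.
Proof.
apply: le_trans (norm1_le_finite_support (@unit_seq_out j)) _.
rewrite big_ord_recr /= big1 ?add0r; first by rewrite /unit_seq eqxx normr1.
by move=> i _; rewrite /unit_seq ltn_eqF ?normr0.
Qed.

End UnitSequences.

Section DunfordSchwartz.
Variable R : realType.
Implicit Types (x y z u v w : rseq R).
Variable T : rseq R -> rseq R.
Hypothesis T_lin : linear_on_linf T.
Hypothesis T_l1 : forall x, summable x -> summable (T x) /\ norm1 (T x) <= norm1 x.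
Hypothesis T_inf : forall x, bounded x -> norm_inf (T x) <= norm_inf x.

Lemma T_bounded x : bounded x -> bounded (T x).
Proof. exact: T_lin.1. Qed.

Lemma T_comb a u v : bounded u -> bounded v ->
  T (rseq_add (rseq_scale a u) v) = rseq_add (rseq_scale a (T u)) (T v).
Proof. exact: T_lin.2. Qed.

Lemma T0 : T (fun _ => 0) = (fun _ => 0).
Proof.
have := T_comb 1 (bounded0 R) (bounded0 R).
have -> : rseq_add (rseq_scale 1 (fun _ : nat => 0 : R)) (fun _ => 0) = (fun _ => 0).
  by apply: funext => n; rewrite /rseq_add /rseq_scale mulr0 addr0.
move=> T0_twice; apply: funext => n; move: (congr1 (fun f => f n) T0_twice).
rewrite /rseq_add /rseq_scale /=; lra.
Qed.

Lemma TD u v : bounded u -> bounded v -> T (rseq_add u v) = rseq_add (T u) (T v).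
Proof.
move=> bu bv; have := T_comb 1 bu bv.
have scale1 w : rseq_scale 1 w = w by apply: funext => n; rewrite /rseq_scale mul1r.
by rewrite !scale1.
Qed.

Lemma TZ a u : bounded u -> T (rseq_scale a u) = rseq_scale a (T u).
Proof.
move=> bu; have := T_comb a bu (bounded0 R); rewrite T0.
have add0 w : rseq_add w (fun _ => 0) = w by apply: funext => n; rewrite /rseq_add addr0.
by rewrite !add0.
Qed.

Lemma TB u v : bounded u -> bounded v -> T (rseq_sub u v) = rseq_sub (T u) (T v).
Proof.
move=> bu bv.
have subE w w' : rseq_sub w w' = rseq_add w (rseq_scale (-1) w').
  by apply: funext => n; rewrite /rseq_sub /rseq_add /rseq_scale mulN1r.
by rewrite !subE TD ?TZ //; apply: boundedZ.
Qed.

Lemma T_le_norm_inf x n : bounded x -> `|T x n| <= norm_inf x.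
Proof. by move=> bx; apply: le_trans (T_inf bx); apply/norm_inf_ub/T_bounded. Qed.

Lemma T_dist_le u v d i : bounded u -> bounded v ->
  (forall m, `|u m - v m| <= d) -> `|T u i - T v i| <= d.
Proof.
move=> bu bv uv; have := T_le_norm_inf i (boundedB bu bv).
by rewrite TB // => /le_trans; apply; apply: norm_inf_le.
Qed.

Lemma iter_bounded k x : bounded x -> bounded (iter k T x).
Proof. by elim: k => //= k IH bx; apply/T_bounded/IH. Qed.

Lemma iter_le_norm_inf k x n : bounded x -> `|iter k T x n| <= norm_inf x.
Proof.
move=> bx; elim: k n => [|k IH] n /=; first exact: norm_inf_ub.
by apply: le_trans (T_le_norm_inf _ (iter_bounded k bx)) _; apply: norm_inf_le.
Qed.

Lemma iter_comb k a u v : bounded u -> bounded v ->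
  iter k T (rseq_add (rseq_scale a u) v) =
  rseq_add (rseq_scale a (iter k T u)) (iter k T v).
Proof. by move=> bu bv; elim: k => //= k ->; rewrite T_comb //; apply: iter_bounded. Qed.

Lemma iterB k u v : bounded u -> bounded v ->
  iter k T (rseq_sub u v) = rseq_sub (iter k T u) (iter k T v).
Proof. by move=> bu bv; elim: k => //= k ->; rewrite TB //; apply: iter_bounded. Qed.

Lemma ces_avg_le_norm_inf n x i : bounded x -> `|ces_avg T n x i| <= norm_inf x.
Proof.
move=> bx; rewrite /ces_avg; case: n => [|n].
  by rewrite big_ord0 mulr0 normr0; apply: norm_inf_ge0.
rewrite normrM ger0_norm ?invr_ge0 // ler_pdivrMl ?ltr0n //.
apply: le_trans (ler_norm_sum _ _ _) _.
apply: le_trans (ler_sum (I := 'I_n.+1) _ (fun k _ => iter_le_norm_inf k i bx)) _.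
by rewrite sumr_const card_ord mulr_natl.
Qed.

Lemma ces_avgB n u v i : bounded u -> bounded v ->
  ces_avg T n (rseq_sub u v) i = ces_avg T n u i - ces_avg T n v i.
Proof.
move=> bu bv; rewrite /ces_avg -mulrBr -sumrB; congr (_ * _).
by apply: eq_bigr => k _; rewrite iterB.
Qed.

Lemma ces_avg_dist_le n u v d i : bounded u -> bounded v ->
  (forall m, `|u m - v m| <= d) -> `|ces_avg T n u i - ces_avg T n v i| <= d.
Proof.
move=> bu bv uv; rewrite -ces_avgB //.
by apply: le_trans (ces_avg_le_norm_inf _ _ (boundedB bu bv)) _; apply: norm_inf_le.
Qed.

Lemma T_c0 x : bounded x -> c0 x -> c0 (T x).
Proof.
move=> bx cx e e0; have e20 : 0 < e / 2 by apply: divr_gt0.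
have [N xN] := c0_trunc_approx cx e20.
have [N' TN'] := summable_c0 (T_l1 (trunc_summable N x)).1 e20.
exists N' => m Nm.
have := T_dist_le m bx (trunc_bounded N bx) xN.
have := TN' m Nm; have := lerB_dist (T x m) (T (trunc N x) m); lra.
Qed.

Lemma iter_summable k x : summable x -> summable (iter k T x).
Proof. by elim: k => //= k IH sx; apply: (T_l1 (IH sx)).1. Qed.

Lemma iter_c0 k x : bounded x -> c0 x -> c0 (iter k T x).
Proof. by elim: k => //= k IH bx cx; apply: T_c0; [apply: iter_bounded | apply: IH]. Qed.

Lemma sum_T_le_sum_support u N (S : seq nat) : (forall m, (N <= m)%N -> u m = 0) ->
  uniq S -> \sum_(j <- S) `|T u j| <= \sum_(i < N) `|u i|.
Proof.
move=> uN uS; have su := finite_support_summable uN.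
apply: le_trans (sum_uniq_le_norm1 (T_l1 su).1 uS) _.
exact: le_trans (T_l1 su).2 (norm1_le_finite_support uN).
Qed.

Lemma sum_T_le_bound v t (S : seq nat) : (forall m, `|v m| <= t) ->
  \sum_(j <- S) `|T v j| <= (size S)%:R * t.
Proof.
move=> vt; rewrite -sum_const_seq; apply: ler_sum => j _.
by apply: le_trans (T_le_norm_inf j (ex_intro _ t vt)) _; apply: norm_inf_le.
Qed.

(* Calderon's argument: clip [y] at the smallest of its [k] largest values;
   the clipped part is small in [l_infty], the rest is small in [l_1]. *)
Lemma calderon_finite (c : nat -> R) y N : {homo c : a b / (a <= b)%N >-> a <= b} ->
  (forall m, (N <= m)%N -> y m = 0) -> uniq_sums_le c y -> uniq_sums_le c (T y).
Proof.
move=> c_mono yN cy S uS; set k := size S.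
have [Nk|kN] := leqP N k.
  apply: le_trans (sum_T_le_sum_support yN uS) _.
  rewrite -(big_mkord xpredT (fun i => `|y i|)) /index_iota subn0.
  by apply: le_trans (cy _ (iota_uniq 0 N)) _; rewrite size_iota c_mono.
have [A [uA sA AN top]] := top_indices y (ltnW kN).
have [k0|k_gt0] := posnP k.
  have := cy [::] isT; rewrite /k in k0 *.
  by move/eqP: k0; rewrite size_eq0 => /eqP ->; rewrite !big_nil.
have A0 : A != [::] by rewrite -size_eq0 sA -lt0n.
have [m0 m0A Hm0] := seq_has_min (fun j => `|y j|) A0.
have yAt j : j \notin A -> `|y j| <= `|y m0|.
  by move=> jA; have [jN|Nj] := ltnP j N; [apply: top | rewrite yN ?normr0].
have [u [v [yuv vt uA' sum_u]]] := clip_decomposition (normr_ge0 _) Hm0 yAt.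
have uN m : (N <= m)%N -> u m = 0.
  by move=> Nm; apply: uA'; apply/negP => /AN; rewrite ltnNge Nm.
have bu := summable_bounded (finite_support_summable uN).
have split_Ty : \sum_(j <- S) `|T y j| <= \sum_(j <- S) `|T u j| + \sum_(j <- S) `|T v j|.
  rewrite -big_split /=; apply: ler_sum => j _.
  by rewrite yuv TD //; [apply: ler_normD | exists `|y m0|].
have sum_Tu : \sum_(j <- S) `|T u j| <= \sum_(a <- A) `|y a| - k%:R * `|y m0|.
  apply: le_trans (sum_T_le_sum_support uN uS) _.
  rewrite (sum_prefix_split (fun i => `|u i|) uA AN) [X in _ + X]big1 ?addr0.
    by rewrite sum_u sA.
  by move=> i /uA' ->; rewrite normr0.
have := cy A uA; have := sum_T_le_bound S vt; rewrite sA -/k.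
move: split_Ty sum_Tu; lra.
Qed.

Lemma calderon (c : nat -> R) y : {homo c : a b / (a <= b)%N >-> a <= b} ->
  bounded y -> c0 y -> uniq_sums_le c y -> uniq_sums_le c (T y).
Proof.
move=> c_mono bY cy yc S uS; apply: (@ler_addgt0_scaled _ _ _ (size S)%:R) => // d d0.
have [N yN] := c0_trunc_approx cy d0.
have := calderon_finite c_mono (@trunc_out _ N y) (uniq_sums_le_trunc N yc) uS.
rewrite -(lerD2r ((size S)%:R * d)); apply: le_trans.
rewrite -sum_const_seq -big_split /=; apply: ler_sum => j _.
have := T_dist_le j bY (trunc_bounded N bY) yN.
have := lerB_dist (T y j) (T (trunc N y) j); lra.
Qed.

Lemma uniq_sums_le_ces_avg x n : bounded x -> c0 x ->
  uniq_sums_le (xstar_psum x) (ces_avg T n x).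
Proof.
move=> bx cx.
have iter_le k : uniq_sums_le (xstar_psum x) (iter k T x).
  elim: k => [|k IH] /=; first exact: uniq_sums_le_xstar_psum.
  apply: calderon => //; last exact: iter_c0.
  - by move=> a b; apply: xstar_psum_mono.
  - exact: iter_bounded.
move=> S uS; rewrite /ces_avg; case: n => [|n].
  under eq_bigr do rewrite big_ord0 mulr0 normr0.
  by rewrite big1 // xstar_psum_ge0.
apply: le_trans (_ : _ <= \sum_(j <- S) (n.+1%:R^-1 * \sum_(k < n.+1) `|iter k T x j|)) _.
  apply: ler_sum => j _; rewrite normrM ger0_norm ?invr_ge0 //.
  by apply: ler_wpM2l; [rewrite invr_ge0 | apply: ler_norm_sum].
rewrite -mulr_sumr exchange_big /= ler_pdivrMl ?ltr0n //.
apply: le_trans (ler_sum (I := 'I_n.+1) _ (fun k _ => iter_le k S uS)) _.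
by rewrite sumr_const card_ord mulr_natl.
Qed.

Definition T_entry i j := T (unit_seq R j) i.

Lemma T_trunc_expand w N i : bounded w ->
  T (trunc N w) i = \sum_(j < N) w j * T_entry i j.
Proof.
move=> bw; elim: N => [|N IH].
  have -> : trunc 0 w = (fun _ => 0) by apply: funext => m.
  by rewrite T0 big_ord0.
have -> : trunc N.+1 w = rseq_add (rseq_scale (w N) (unit_seq R N)) (trunc N w).
  apply: funext => m; rewrite /rseq_add /rseq_scale /trunc /unit_seq ltnS leq_eqVlt.
  by case: eqP => [->|_] /=; rewrite ?ltnn ?mulr1 ?addr0 ?mulr0 ?add0r.
rewrite T_comb; [| exact: unit_seq_bounded | exact: trunc_bounded].
by rewrite /rseq_add /rseq_scale big_ord_recr addrC IH.
Qed.

(* Test [T] on the sign pattern of the [i]-th row. *)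
Lemma T_entry_row_sum i N : \sum_(j < N) `|T_entry i j| <= 1.
Proof.
have sg_le1 j : `|Num.sg (T_entry i j)| <= 1 by rewrite normr_sg; case: (_ != 0).
have bsg : bounded (fun j => Num.sg (T_entry i j)) by exists 1.
have := T_le_norm_inf i (trunc_bounded N bsg); rewrite T_trunc_expand //.
under eq_bigr do rewrite -normrEsg.
move/(le_trans (ler_norm _))/le_trans; apply; apply: norm_inf_le => m.
by rewrite /trunc; case: ifP; rewrite ?normr0.
Qed.

Lemma T_entry_col_sum j M : \sum_(i < M) `|T_entry i j| <= 1.
Proof.
have [sT nT] := T_l1 (unit_seq_summable R j).
exact: le_trans (norm1_ub M sT) (le_trans nT (norm1_unit_seq R j)).
Qed.

(* Schur's test: rows and columns of the matrix of [T] have [l_1]-norm [<= 1]. *)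
Lemma sum_sqr_T_trunc_le w N M : bounded w ->
  \sum_(i < M) T (trunc N w) i ^+ 2 <= \sum_(j < N) w j ^+ 2.
Proof.
move=> bw.
apply: le_trans (_ : _ <= \sum_(i < M) \sum_(j < N) `|T_entry i j| * w j ^+ 2) _.
  apply: ler_sum => i _; rewrite T_trunc_expand //.
  set t := T_entry i.
  have row_abs : `|\sum_(j < N) w j * t j| <= \sum_(j < N) `|t j| * `|w j|.
    apply: le_trans (ler_norm_sum _ _ _) _.
    by apply: ler_sum => j _; rewrite normrM mulrC.
  rewrite -real_normK ?num_real //.
  apply: le_trans (_ : _ <= (\sum_(j < N) `|t j| * `|w j|) ^+ 2) _.
    by rewrite ler_sqr ?nnegrE // sumr_ge0 // => j _; rewrite mulr_ge0.
  apply: le_trans (@sqr_sum_le_weighted _ N (fun j => `|t j|) (fun j => `|w j|)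
    (fun j => normr_ge0 _)) _.
  have -> : \sum_(j < N) `|t j| * `|w j| ^+ 2 = \sum_(j < N) `|t j| * w j ^+ 2.
    by apply: eq_bigr => j _; rewrite real_normK ?num_real.
  rewrite -[X in _ <= X]mul1r; apply: ler_wpM2r; last exact: T_entry_row_sum.
  by apply: sumr_ge0 => j _; rewrite mulr_ge0 ?sqr_ge0.
rewrite exchange_big /=; apply: ler_sum => j _.
rewrite -mulr_suml -[X in _ <= X]mul1r; apply: ler_wpM2r; last exact: T_entry_col_sum.
exact: sqr_ge0.
Qed.

Lemma sqnorm2_T_le w : summable w -> sqnorm2 (T w) <= sqnorm2 w.
Proof.
move=> sw; have bw := summable_bounded sw; apply: sqnorm2_le => M.
set B := norm_inf w; have B0 : 0 <= B := norm_inf_ge0 bw.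
apply: (@ler_addgt0_scaled _ _ _ (M%:R * (2 * B))); first by rewrite !mulr_ge0.
move=> d d0; have [N wN] := c0_trunc_approx (summable_c0 sw) d0.
have bt := trunc_bounded N bw.
apply: le_trans (_ : _ <= \sum_(i < M) (T (trunc N w) i ^+ 2 + 2 * B * d)) _.
  apply: ler_sum => i _; apply: sqr_le_sqr_add.
  - exact: T_dist_le.
  - exact: T_le_norm_inf.
  - apply: le_trans (T_le_norm_inf i bt) _; apply: norm_inf_le => m.
    by rewrite /trunc; case: ifP => _; [apply: norm_inf_ub | rewrite normr0].
rewrite big_split /= sumr_const card_ord -[(2 * B * d) *+ M]mulr_natl !mulrA lerD2r.
exact: le_trans (sum_sqr_T_trunc_le _ _ bw) (sqnorm2_ub N sw).
Qed.

Lemma iterZ k a u : bounded u -> iter k T (rseq_scale a u) = rseq_scale a (iter k T u).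
Proof. by move=> bu; elim: k => //= k ->; rewrite TZ //; apply: iter_bounded. Qed.

Lemma ces_avg_comb n l u v i : bounded u -> bounded v ->
  ces_avg T n (comb l u v) i = l * ces_avg T n u i + (1 - l) * ces_avg T n v i.
Proof.
move=> bu bv; have iterC k : iter k T (comb l u v) = comb l (iter k T u) (iter k T v).
  by rewrite /comb iter_comb ?iterZ //; apply: boundedZ.
rewrite /ces_avg; under eq_bigr do rewrite iterC.
rewrite /rseq_add /rseq_scale big_split /= -!mulr_sumr; ring.
Qed.

Lemma ces_avg_T n u i : bounded u -> (0 < n)%N ->
  n%:R * (ces_avg T n (T u) i - ces_avg T n u i) = iter n T u i - u i.
Proof.
move=> bu n0; rewrite /ces_avg -mulrBr mulrA mulfV ?pnatr_eq0 -?lt0n // mul1r -sumrB.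
under eq_bigr do rewrite -iterSr.
by rewrite -(big_mkord xpredT (fun k => iter k.+1 T u i - iter k T u i)) telescope_sumr.
Qed.

Lemma ces_avg_T_dist u B n i : bounded u -> (forall m, `|u m| <= B) -> (0 < n)%N ->
  n%:R * `|ces_avg T n (T u) i - ces_avg T n u i| <= 2 * B.
Proof.
move=> bu uB n0; rewrite -[n%:R]ger0_norm // -normrM ces_avg_T //.
apply: le_trans (ler_normB _ _) _.
have := iter_le_norm_inf n i bu; have := uB i; have := norm_inf_le uB; lra.
Qed.

Lemma ces_avg1 u : ces_avg T 1 u = u.
Proof. by apply: funext => i; rewrite /ces_avg big_ord1 invr1 mul1r. Qed.

Lemma ces_avgS n u :
  ces_avg T n.+2 u = comb (n.+1%:R / n.+2%:R) (ces_avg T n.+1 u) (iter n.+1 T u).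
Proof.
apply: funext => i; rewrite /comb /rseq_add /rseq_scale /ces_avg big_ord_recr /=.
have n0 : (0 : R) <= n%:R := ler0n _ _.
have -> : (n.+2%:R : R) = n%:R + 2 by rewrite -addn2 natrD.
rewrite -natr1; field.
by apply/andP; split; apply/negP => /eqP; lra.
Qed.

Lemma ratio_succ_in01 n : 0 <= (n.+1%:R / n.+2%:R : R) <= 1.
Proof. by rewrite divr_ge0 //= ler_pdivrMr ?ltr0n // mul1r ler_nat. Qed.

Inductive orbit_hull (x0 : rseq R) : rseq R -> Prop :=
| hull_base : orbit_hull x0 x0
| hull_T (y : rseq R) : orbit_hull x0 y -> orbit_hull x0 (T y)
| hull_comb (l : R) (y z : rseq R) : 0 <= l <= 1 -> orbit_hull x0 y -> orbit_hull x0 z ->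
    orbit_hull x0 (comb l y z).

Section OrbitHull.
Variable x0 : rseq R.
Hypothesis x0_summable : summable x0.
Let x0_bounded := summable_bounded x0_summable.

Lemma orbit_hull_summable y : orbit_hull x0 y -> summable y.
Proof.
elim=> // [u _ su | l u v l01 _ su _ sv]; first exact: (T_l1 su).1.
exact: summable_comb.
Qed.

Lemma orbit_hull_le_norm_inf y i : orbit_hull x0 y -> `|y i| <= norm_inf x0.
Proof.
move=> hy; elim: hy i => [i | u hu uB i | l u v l01 _ uB _ vB i].
- exact: norm_inf_ub.
- apply: le_trans (T_le_norm_inf i (summable_bounded (orbit_hull_summable hu))) _.
  exact: norm_inf_le.
- exact: comb_le_norm_inf.
Qed.

Lemma orbit_hull_bounded y : orbit_hull x0 y -> bounded y.
Proof. by move=> hy; exists (norm_inf x0) => i; apply: orbit_hull_le_norm_inf. Qed.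

Lemma orbit_hull_ces_avg_near y : orbit_hull x0 y -> exists2 K, 0 <= K &
  forall n i, (0 < n)%N -> n%:R * `|ces_avg T n y i - ces_avg T n x0 i| <= K.
Proof.
have B0 : 0 <= norm_inf x0 := norm_inf_ge0 x0_bounded.
elim=> [|u hu [K K0 uK] | l u v l01 hu [K1 K10 uK1] hv [K2 K20 vK2]].
- by exists 0 => // n i _; rewrite subrr normr0 mulr0.
- exists (K + 2 * norm_inf x0) => [|n i n0]; first lra.
  have := ces_avg_T_dist i (orbit_hull_bounded hu)
    (fun m => orbit_hull_le_norm_inf m hu) n0.
  have := ler_wpM2l (ler0n R n) (ler_distD (ces_avg T n u i)
    (ces_avg T n (T u) i) (ces_avg T n x0 i)).
  by rewrite mulrDr; move: (uK n i n0); lra.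
- exists (K1 + K2) => [|n i n0]; first lra.
  move: (l01) => /andP [l0 l1]; have l1' : 0 <= 1 - l by lra.
  rewrite ces_avg_comb; [| exact: orbit_hull_bounded hu | exact: orbit_hull_bounded hv].
  have -> : l * ces_avg T n u i + (1 - l) * ces_avg T n v i - ces_avg T n x0 i =
    l * (ces_avg T n u i - ces_avg T n x0 i) +
    (1 - l) * (ces_avg T n v i - ces_avg T n x0 i) by ring.
  apply: le_trans (ler_wpM2l (ler0n _ n) (ler_normD _ _)) _.
  rewrite !normrM (ger0_norm l0) (ger0_norm l1') mulrDr.
  rewrite [n%:R * (l * _)]mulrCA [n%:R * ((1 - l) * _)]mulrCA.
  apply: lerD; rewrite -[X in _ <= X]mul1r; apply: ler_pM; rewrite ?mulr_ge0 //.
  - exact: uK1.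
  - lra.
  - exact: vK2.
Qed.

Lemma ces_avg_orbit_hull n y : orbit_hull x0 y -> orbit_hull x0 (ces_avg T n.+1 y).
Proof.
move=> hy; elim: n => [|n IH]; first by rewrite ces_avg1.
rewrite ces_avgS; apply: hull_comb => //; first exact: ratio_succ_in01.
by elim: n.+1 => //= k hk; apply: hull_T.
Qed.

Lemma sqnorm2_ces_avg_le n y : orbit_hull x0 y ->
  sqnorm2 (ces_avg T n.+1 y) <= sqnorm2 y.
Proof.
move=> hy; have sy := orbit_hull_summable hy.
have sqnorm2_iter k : sqnorm2 (iter k T y) <= sqnorm2 y.
  by elim: k => //= k IH; apply: le_trans IH; apply/sqnorm2_T_le/iter_summable.
elim: n => [|n IH]; first by rewrite ces_avg1.
have /andP [l0 l1] := ratio_succ_in01 n.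
rewrite ces_avgS; apply: le_trans (sqnorm2_comb (ratio_succ_in01 n) _ _) _.
- exact/orbit_hull_summable/ces_avg_orbit_hull.
- exact: iter_summable.
have l1' : 0 <= 1 - n.+1%:R / n.+2%:R :> R by rewrite subr_ge0.
apply: le_trans (lerD (ler_wpM2l l0 IH) (ler_wpM2l l1' (sqnorm2_iter n.+1))) _.
by rewrite -mulrDl addrC subrK mul1r.
Qed.

(* [y] nearly minimises [sqnorm2] on the hull, which contains the midpoint of
   any two averages of [y]: the parallelogram law forces these to be close. *)
Lemma near_min_ces_avg_close y e : orbit_hull x0 y -> 0 < e ->
  sqnorm2 y <= inf [set sqnorm2 z | z in orbit_hull x0] + e ^+ 2 / 8 ->
  forall n m i, `|ces_avg T n.+1 y i - ces_avg T m.+1 y i| <= e.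
Proof.
move=> hy e0 y_min n m i; have e8 : 0 < e ^+ 2 / 8 by rewrite divr_gt0 ?exprn_gt0.
have hn := ces_avg_orbit_hull n hy; have hm := ces_avg_orbit_hull m hy.
set mid := comb (1 / 2) (ces_avg T n.+1 y) (ces_avg T m.+1 y).
have mid_ge : inf [set sqnorm2 z | z in orbit_hull x0] <= sqnorm2 mid.
  apply: ge_inf; last by exists mid => //; apply: hull_comb => //; apply/andP; split; lra.
  by exists 0 => _ [z hz <-]; apply/sqnorm2_ge0/orbit_hull_summable.
suff : `|ces_avg T n.+1 y i - ces_avg T m.+1 y i| ^+ 2 <= e ^+ 2.
  by rewrite ler_sqr ?nnegrE // ltW.
rewrite real_normK ?num_real //.
have := parallelogram_le i (orbit_hull_summable hn) (orbit_hull_summable hm) e8.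
have := sqnorm2_ces_avg_le n hy; have := sqnorm2_ces_avg_le m hy.
have -> : (ces_avg T n.+1 y i - ces_avg T m.+1 y i) ^+ 2 =
  4 * ((ces_avg T n.+1 y i - ces_avg T m.+1 y i) / 2) ^+ 2 by field.
move: mid_ge y_min; rewrite -/mid; lra.
Qed.

Lemma summable_ces_avg_unif_cauchy : unif_cauchy (fun n => ces_avg T n x0).
Proof.
apply: unif_cauchy_approx => e e0.
have e8 : 0 < e ^+ 2 / 8 by rewrite divr_gt0 ?exprn_gt0.
have hull_inf : has_inf [set sqnorm2 z | z in orbit_hull x0].
  split; first by exists (sqnorm2 x0), x0 => //; apply: hull_base.
  by exists 0 => _ [z hz <-]; apply/sqnorm2_ge0/orbit_hull_summable.
have [_ [y hy <-] /ltW y_min] := inf_adherent e8 hull_inf.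
have [K K0 yK] := orbit_hull_ces_avg_near hy.
exists (fun n => ces_avg T n y), (maxn 1 (Num.bound (K / e))).
split=> [n m | n]; rewrite ?geq_max.
  move=> /andP [n0 _] /andP [m0 _] i; case: n n0 => // n _; case: m m0 => // m _.
  exact: near_min_ces_avg_close.
move=> /andP [n0 nN] i; have n_pos : (0 : R) < n%:R by rewrite ltr0n.
rewrite distrC -(ler_pM2l n_pos).
exact: le_trans (yK n i n0) (le_natmul_bound K0 e0 nN).
Qed.

End OrbitHull.

Lemma ces_avg_unif_cauchy x : bounded x -> c0 x -> unif_cauchy (fun n => ces_avg T n x).
Proof.
move=> bx cx; apply: unif_cauchy_approx => e e0.
have [N0 xN0] := c0_trunc_approx cx e0.
have [N gC] := summable_ces_avg_unif_cauchy (trunc_summable N0 x) e0.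
exists (fun n => ces_avg T n (trunc N0 x)), N; split=> // n _ i.
exact: ces_avg_dist_le bx (trunc_bounded N0 bx) xN0.
Qed.

End DunfordSchwartz.

Theorem theorem1p1 (R : realType) (E : set (rseq R)) (normE : rseq R -> R)
  (T : rseq R -> rseq R) :
  fully_symmetric_space E normE ->
  (exists x : rseq R, bounded x /\ ~ E x) ->
  dunford_schwartz T ->
  forall x, E x ->
  exists xh, E xh /\
    forall eps : R, 0 < eps -> exists N : nat, forall n : nat, (N <= n)%N ->
      norm_inf (rseq_sub (ces_avg T n x) xh) < eps.
Proof.
move=> [Esym Efull] E_proper [T_lin [T_l1 T_inf]] x Ex.
have cx := symmetric_space_c0 Esym E_proper Ex.
have bx : bounded x := Esym.1 x Ex.
have [xh xh_lim] := unif_cauchy_cvg (ces_avg_unif_cauchy T_lin T_l1 T_inf bx cx).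
have bxh : bounded xh.
  exact: unif_cvg_bounded (fun n i => ces_avg_le_norm_inf T_lin T_inf n i bx) xh_lim.
have xh_maj : majorized xh x.
  apply: majorized_of_uniq_sums_le bxh (unif_cvg_uniq_sums_le _ xh_lim) => n.
  exact: uniq_sums_le_ces_avg.
exists xh; split; first exact: (Efull xh x bxh Ex xh_maj).1.
by move=> eps eps0; apply: unif_cvg_norm_inf.
Qed.
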